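(* Let $T$ be a tree on $n$ vertices. Then $k(T)=3$ if and only if $T\in\mathcal{T}$, where $\mathcal{T}$ is the family of trees obtained by appending $b\ge 1$ pendent vertices to each leaf of a star, or to each leaf of a balanced double star (the same $b$ for every leaf).
   Context: For a connected graph $G=(V,E)$ and $v\in V$, the status of $v$ is $s(v)=\sum_{u\in V} d(v,u)$, where $d$ is the shortest-path distance; $k(G)$ is the number of distinct status values of vertices of $G$. A star is a tree of diameter $2$, i.e. $K_{1,m}$ with $m\ge 2$. A balanced double star is a graph obtained from $K_2$ by appending $a\ge 1$ pendent vertices to each of its two vertices (the same $a$ for both). *)

(* simple graphs as symmetric irreflexive relations on a finType. *)
From mathcomp Require Import all_boot.
Set Implicit Arguments. Unset Strict Implicit. Unset Printing Implicit Defensive.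

Section Graphs.
Variable T : finType.
Variable e : rel T.

Definition connectedg : Prop := forall x y : T, connect e x y.

Definition acyclicg : Prop :=
  forall p : seq T, uniq p -> 2 < size p -> ~~ cycle e p.

Definition is_tree : Prop := connectedg /\ acyclicg.

Fixpoint ball (k : nat) (x : T) : {set T} :=
  match k with
  | 0 => [set x]
  | k'.+1 => ball k' x :|: [set y | [exists z in ball k' x, e z y]]
  end.

(* shortest-path distance: d(x,y) = #{k : y not within distance k of x}
   (equal to the usual distance in a connected graph, since every distance is < #|T|) *)
Definition dist (x y : T) : nat :=
  \sum_(k < #|T|) nat_of_bool (y \notin ball k x).

Definition status (v : T) : nat := \sum_(u : T) dist v u.

Definition kstat : nat := size (undup [seq status v | v <- enum T]).

Definition graph_iso (M : finType) (eM : rel M) : Prop :=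
  exists f : T -> M, bijective f /\ forall x y, eM (f x) (f y) = e x y.

End Graphs.

(* Star K_{1,m} (center None, leaves Some (inl i)) with b pendent vertices
   Some (inr (i,j)) appended to each leaf i. *)
Definition star_pend_rel (m b : nat) : rel (option ('I_m + 'I_m * 'I_b)) :=
  fun x y =>
    match x, y with
    | None, Some (inl _) => true
    | Some (inl _), None => true
    | Some (inl i), Some (inr (i', _)) => i == i'
    | Some (inr (i', _)), Some (inl i) => i == i'
    | _, _ => false
    end.

(* Balanced double star: centers inl (inl c) (c : bool), joined to each other;
   leaves inl (inr (c,i)) (a of them on each center c); b pendent vertices
   inr (c,i,j) appended to each leaf (c,i). *)
Definition dstar_pend_rel (a b : nat)
  : rel ((bool + bool * 'I_a) + bool * 'I_a * 'I_b) :=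
  fun x y =>
    match x, y with
    | inl (inl c), inl (inl c') => c != c'
    | inl (inl c), inl (inr (c', _)) => c == c'
    | inl (inr (c', _)), inl (inl c) => c == c'
    | inl (inr (c, i)), inr (c', i', _) => (c == c') && (i == i')
    | inr (c', i', _), inl (inr (c, i)) => (c == c') && (i == i')
    | _, _ => false
    end.

Definition in_family (T : finType) (e : rel T) : Prop :=
  (exists m b : nat, 2 <= m /\ 1 <= b /\ graph_iso e (@star_pend_rel m b)) \/
  (exists a b : nat, 1 <= a /\ 1 <= b /\ graph_iso e (@dstar_pend_rel a b)).

From mathcomp Require Import all_boot zify.
From mathcomp Require Import fingroup perm.
Set Implicit Arguments. Unset Strict Implicit. Unset Printing Implicit Defensive.

(* For an edge uv of a tree, s(u) - s(v) = n_v - n_u, where n_u counts the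
   vertices closer to u than to v.  Hence a leaf l hanging on p has
   s(l) = s(p) + n - 2, a vertex u whose neighbours other than m are k leaves has
   s(u) + 2(k + 1) = s(m) + n, and s is strictly convex: 2 s(v) < s(u) + s(w)
   for distinct neighbours u, w of v, so a local minimum of s is a global one.
   If s takes exactly three values s1 < s2 < s3, these facts force: the
   leaves are exactly the vertices of status s3; the vertices of status s1 (the
   centres) are pairwise adjacent, hence one or two; every other vertex is
   adjacent to a centre and all its other neighbours are leaves, equally many
   for all such vertices by the second formula; and two centres, having equal
   status, have arms of equal size.
   Conversely, the automorphisms of either model tree act transitively on its
   centres, on their other neighbours and on its leaves, so there are at most
   three statuses, and convexity at a centre and the leaf formula separate them. *)

Lemma size_undup_map3P (X : finType) (F : X -> nat) :
  size (undup [seq F x | x <- enum X]) = 3 <->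
  exists a b c, [/\ F a < F b, F b < F c & forall x, F x \in [:: F a; F b; F c]].
Proof.
set vals := undup _.
have mem_vals w : (w \in vals) = [exists x, F x == w].
  rewrite mem_undup; apply/mapP/existsP => [[x _ ->]|[x /eqP <-]]; first by exists x.
  by exists x; rewrite ?mem_enum.
split=> [size3|[a [b [c [ab bc abc]]]]]; last first.
  have /perm_size <- : perm_eq [:: F a; F b; F c] vals.
    apply: uniq_perm; rewrite ?undup_uniq //=.
      by rewrite !inE !negb_or !neq_ltn ab bc (ltn_trans ab bc).
    move=> w; rewrite mem_vals; apply/idP/existsP => [|[x /eqP <-]]; last exact: abc.
    by rewrite !inE => /or3P[] /eqP ->; [exists a | exists b | exists c].
  by [].
have mem_sorted w : (w \in sort leq vals) = [exists x, F x == w].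
  by rewrite mem_sort mem_vals.
have : sorted ltn (sort leq vals).
  by rewrite ltn_sorted_uniq_leq sort_uniq undup_uniq (sort_sorted leq_total).
have := size_sort leq vals; rewrite size3.
case: (sort leq vals) mem_sorted => [|x [|y [|z []]]] // mem_sorted _ /and3P[xy yz _].
have /existsP[a /eqP Fa] : [exists a, F a == x] by rewrite -mem_sorted inE eqxx.
have /existsP[b /eqP Fb] : [exists b, F b == y] by rewrite -mem_sorted !inE eqxx orbT.
have /existsP[c /eqP Fc] : [exists c, F c == z] by rewrite -mem_sorted !inE eqxx !orbT.
exists a, b, c; rewrite Fa Fb Fc; split => // v.
by rewrite mem_sorted; apply/existsP; exists v.
Qed.

Lemma card_sum_mem (X : finType) (A : {pred X}) : #|A| = \sum_x (x \in A : nat).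
Proof. by rewrite -sum1_card big_mkcond; apply: eq_bigr => x _; case: (x \in A). Qed.

Lemma sum_eq_indicator (X : finType) (P : {pred X}) (x0 : X) :
  \sum_(x | P x) (x0 == x : nat) = P x0.
Proof.
rewrite big_mkcond (bigD1 x0) //= eqxx big1 => [| x /negbTE]; first by case: (P x0).
by rewrite eq_sym => ->; case: (P x).
Qed.

Lemma enum_nthP (X : finType) (A : {set X}) (x0 : X) k : #|A| = k ->
  [/\ injective (fun j : 'I_k => nth x0 (enum A) j),
      forall j : 'I_k, nth x0 (enum A) j \in A &
      forall x, x \in A -> exists j : 'I_k, nth x0 (enum A) j = x].
Proof.
move=> <-; split.
- by move=> j j' /eqP; rewrite nth_uniq -?cardE ?enum_uniq // => /eqP/val_inj.
- by move=> j; rewrite -mem_enum mem_nth // -cardE.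
- move=> x xA; have jx : index x (enum A) < #|A| by rewrite cardE index_mem mem_enum.
  by exists (Ordinal jx); rewrite nth_index ?mem_enum.
Qed.

Section Isomorphism.
Variables (T1 T2 : finType) (e1 : rel T1) (e2 : rel T2) (f : T1 -> T2).
Hypotheses (f_bij : bijective f) (f_edge : forall x y, e2 (f x) (f y) = e1 x y).

Lemma ball_iso k x y : (f y \in ball e2 k (f x)) = (y \in ball e1 k x).
Proof.
elim: k y => [|k IH] y /=; first by rewrite !in_set1 (bij_eq f_bij).
rewrite !in_setU !in_set IH; congr orb.
apply/existsP/existsP => [[z]|[z]]; last by rewrite -IH -f_edge; exists (f z).
by case: f_bij => g fgK gfK; rewrite -[z]gfK IH f_edge; exists (g z).
Qed.

Lemma dist_iso x y : dist e2 (f x) (f y) = dist e1 x y.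
Proof.
rewrite /dist -(bij_eq_card f_bij).
by apply: eq_bigr => k _; rewrite ball_iso.
Qed.

Lemma status_iso x : status e2 (f x) = status e1 x.
Proof.
rewrite /status (reindex f (onW_bij _ f_bij)).
by apply: eq_bigr => y _; rewrite dist_iso.
Qed.

End Isomorphism.

Lemma graph_iso_inv (T M : finType) (e : rel T) (eM : rel M) : graph_iso e eM ->
  exists g : M -> T, [/\ bijective g, forall a b, e (g a) (g b) = eM a b &
                         forall a, status e (g a) = status eM a].
Proof.
case=> f [[g fK gK] f_edge].
have g_bij : bijective g by exists f.
have g_edge a b : e (g a) (g b) = eM a b by rewrite -f_edge !gK.
by exists g; split=> // a; apply: status_iso.
Qed.

Section Models.
Variables m a b : nat.

Definition star_parent (x : option ('I_m + 'I_m * 'I_b))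
    : option (option ('I_m + 'I_m * 'I_b)) :=
  match x with
  | None => None
  | Some (inl _) => Some None
  | Some (inr (i, _)) => Some (Some (inl i))
  end.

Lemma star_pend_relE x y :
  star_pend_rel x y = (star_parent x == Some y) || (star_parent y == Some x).
Proof.
case: x y => [[i|[i j]]|] [[i'|[i' j']]|]; do ?rewrite !eqE /=; rewrite ?orbF //.
all: by apply/eqnP/eqnP => ->.
Qed.

Definition dstar_parent (x : (bool + bool * 'I_a) + bool * 'I_a * 'I_b)
    : option ((bool + bool * 'I_a) + bool * 'I_a * 'I_b) :=
  match x with
  | inl (inl c) => if c then None else Some (inl (inl true))
  | inl (inr (c, _)) => Some (inl (inl c))
  | inr (c, i, _) => Some (inl (inr (c, i)))
  end.

Lemma dstar_pend_relE x y :
  dstar_pend_rel x y = (dstar_parent x == Some y) || (dstar_parent y == Some x).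
Proof.
case: x y => [[[] | [[] i]] | [[[] i] j]] [[[] | [[] i']] | [[[] i'] j']];
  do ?rewrite !eqE /=; rewrite ?orbF //.
all: by apply/eqnP/eqnP => ->.
Qed.

Lemma star_pend_rel_leaf (i : 'I_m) (j : 'I_b) x :
  star_pend_rel (Some (inr (i, j))) x = (x == Some (inl i)).
Proof. by case: x => [[i'|[i' j']]|]; do ?rewrite !eqE /=. Qed.

Lemma dstar_pend_rel_leaf c (i : 'I_a) (j : 'I_b) x :
  dstar_pend_rel (inr (c, i, j)) x = (x == inl (inr (c, i))).
Proof. by case: x => [[c'|[c' i']]|[[c' i'] j']]; do ?rewrite !eqE /=. Qed.

Definition star_perm (p : {perm 'I_m}) (q : {perm 'I_b}) (x : option ('I_m + 'I_m * 'I_b)) :=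
  match x with
  | None => None
  | Some (inl i) => Some (inl (p i))
  | Some (inr (i, j)) => Some (inr (p i, q j))
  end.

Lemma star_perm_edge p q x y :
  star_pend_rel (star_perm p q x) (star_perm p q y) = star_pend_rel x y.
Proof. by case: x y => [[i|[i j]]|] [[i'|[i' j']]|] //=; rewrite (inj_eq perm_inj). Qed.

Lemma star_perm_bij p q : bijective (star_perm p q).
Proof.
by exists (star_perm p^-1 q^-1) => [[[i|[i j]]|]|[[i|[i j]]|]] //=; rewrite ?permK ?permKV.
Qed.

Definition dstar_perm (k : {perm bool}) (p : {perm 'I_a}) (q : {perm 'I_b})
    (x : (bool + bool * 'I_a) + bool * 'I_a * 'I_b) :=
  match x with
  | inl (inl c) => inl (inl (k c))
  | inl (inr (c, i)) => inl (inr (k c, p i))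
  | inr (c, i, j) => inr (k c, p i, q j)
  end.

Lemma dstar_perm_edge k p q x y :
  dstar_pend_rel (dstar_perm k p q x) (dstar_perm k p q y) = dstar_pend_rel x y.
Proof.
by case: x y => [[c|[c i]]|[[c i] j]] [[c'|[c' i']]|[[c' i'] j']] //=; rewrite !(inj_eq perm_inj).
Qed.

Lemma dstar_perm_bij k p q : bijective (dstar_perm k p q).
Proof.
exists (dstar_perm k^-1 p^-1 q^-1).
  by case=> [[c|[c i]]|[[c i] j]] /=; rewrite !permK.
by case=> [[c|[c i]]|[[c i] j]] /=; rewrite !permKV.
Qed.

End Models.

Section Tree.
Variables (T : finType) (e : rel T).
Hypotheses (e_sym : symmetric e) (e_irr : irreflexive e).
Hypotheses (e_conn : connectedg e) (e_acyc : acyclicg e).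

Local Notation d := (dist e).
Local Notation s := (status e).
Local Notation n := #|T|.

(** * Distances *)

Lemma ballS k x y :
  (y \in ball e k.+1 x) = (y \in ball e k x) || [exists z in ball e k x, e z y].
Proof. by rewrite /= in_setU in_set. Qed.

Lemma ball_le k k' x y : k <= k' -> y \in ball e k x -> y \in ball e k' x.
Proof.
elim: k' => [|k' IH]; first by rewrite leqn0 => /eqP ->.
by rewrite leq_eqVlt ltnS => /predU1P[-> // | /IH yk /yk]; rewrite ballS => ->.
Qed.

Lemma ball_edge k x u v : u \in ball e k x -> e u v -> v \in ball e k.+1 x.
Proof. by move=> uk uv; rewrite ballS; apply/orP; right; apply/existsP; exists u; rewrite uk. Qed.

Lemma ball_trans k j x y z :
  y \in ball e k x -> z \in ball e j y -> z \in ball e (k + j) x.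
Proof.
move=> yk; elim: j z => [|j IH] z; first by rewrite in_set1 addn0 => /eqP ->.
rewrite ballS addnS => /orP[/IH /(ball_le (leqnSn _)) // | /existsP[w /andP[/IH wk wz]]].
exact: ball_edge wk wz.
Qed.

Lemma ball_sym k x y : y \in ball e k x -> x \in ball e k y.
Proof.
elim: k y => [|k IH] y; first by rewrite !in_set1 eq_sym.
rewrite ballS => /orP[/IH /(ball_le (leqnSn _)) // | /existsP[z /andP[/IH zk zy]]].
have yz : z \in ball e 1 y by apply: (ball_edge (u := y)); rewrite ?in_set1 // e_sym.
by rewrite -add1n; apply: ball_trans yz zk.
Qed.

Lemma ball_card x y : y \in ball e n.-1 x.
Proof.
have /connectP[p xp ->] := e_conn x y; case: (shortenP xp) => q xq uq _.
have size_q : size q <= n.-1.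
  have n_gt0 : 0 < n by apply/card_gt0P; exists x.
  by rewrite -ltnS (ltn_predK n_gt0) -[(size q).+1]/(size (x :: q)) -(card_uniqP uq) max_card.
apply: (ball_le size_q); rewrite (last_nth x).
elim: {-2}(size q) (leqnn (size q)) => [|i IH] i_q; first by rewrite in_set1.
by apply: ball_edge (IH (ltnW i_q)) _; move/pathP: xq; apply.
Qed.

Lemma distP x y k : (y \in ball e k x) = (d x y <= k).
Proof.
pose P k := y \in ball e k x.
have Pn : exists k, P k by exists n.-1; exact: ball_card.
have -> : d x y = ex_minn Pn.
  case: ex_minnP => D PD D_min; have Dn : D <= n.-1 by apply/D_min/ball_card.
  rewrite /dist (eq_bigr (fun i : 'I_n => nat_of_bool (i < D))) => [|i _]; last first.
    case: ltnP => [iD|/ball_le/(_ PD) -> //]; congr nat_of_bool.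
    by apply/negP => /D_min; rewrite leqNgt iD.
  rewrite -(big_mkord xpredT (fun i => nat_of_bool (i < D))).
  rewrite (big_cat_nat (n := D)) ?(leq_trans Dn) ?leq_pred //=.
  rewrite (eq_big_nat _ _ (F2 := fun=> 1)) => [|i /andP[_ ->] //].
  rewrite sum_nat_const_nat big1_seq ?addn0 ?subn0 ?muln1 // => i /andP[_].
  by rewrite mem_index_iota leqNgt => /andP[/negbTE -> _].
case: ex_minnP => D PD D_min; apply/idP/idP; first exact: D_min.
by move=> Dk; apply: ball_le Dk PD.
Qed.

Lemma dist_eq0 x y : (d x y == 0) = (y == x).
Proof. by rewrite -leqn0 -distP in_set1. Qed.

Lemma dist_refl x : d x x = 0.
Proof. by apply/eqP; rewrite dist_eq0. Qed.

Lemma dist_sym x y : d x y = d y x.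
Proof.
by apply/eqP; rewrite eqn_leq -!distP; apply/andP; split; apply: ball_sym; rewrite distP.
Qed.

Lemma dist_edge x u v : e u v -> d x v <= (d x u).+1.
Proof. by move=> uv; rewrite -distP; apply: ball_edge uv; rewrite distP. Qed.

Lemma dist_pred x y k : d x y = k.+1 -> exists2 z, e z y & d x z = k.
Proof.
move=> xy; have : y \in ball e k.+1 x by rewrite distP xy.
rewrite ballS distP xy ltnn => /existsP[z /andP[]]; rewrite distP => zk zy.
by exists z => //; apply/eqP; rewrite eqn_leq zk -ltnS -xy dist_edge.
Qed.

Lemma dist_eq1 x y : (d x y == 1) = e x y.
Proof.
apply/eqP/idP => [/dist_pred[z zy /eqP] | xy]; first by rewrite dist_eq0 => /eqP <-.
have := dist_edge x xy; rewrite dist_refl leq_eqVlt ltnS leqn0 dist_eq0.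
by case/orP => [/eqP // | /eqP yx]; rewrite yx e_irr in xy.
Qed.

Lemma edge_neq x y : e x y -> x != y.
Proof. by apply: contraTneq => ->; rewrite e_irr. Qed.

(* The predecessors of y1 and y2 towards x would close a cycle with the path;
   this is the only use of acyclicity. *)
Lemma no_path_beyond x k y1 y2 c : d x y1 = k -> d x y2 = k -> y1 != y2 ->
  path e y1 (rcons c y2) -> uniq c -> all (fun z => k < d x z) c -> False.
Proof.
elim: k y1 y2 c => [|k IH] y1 y2 c xy1 xy2 y12 y12_path uc c_far.
  move/eqP: xy1; move/eqP: xy2; rewrite !dist_eq0 => /eqP y2x /eqP y1x.
  by rewrite y1x y2x eqxx in y12.
have [p1 p1y1 xp1] := dist_pred xy1; have [p2 p2y2 xp2] := dist_pred xy2.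
have y1c : y1 \notin c by apply/negP => /(allP c_far); rewrite xy1 ltnn.
have y2c : y2 \notin c by apply/negP => /(allP c_far); rewrite xy2 ltnn.
have far_c z : z \in c -> k < d x z by move/(allP c_far); apply: ltnW.
have p1_path : path e p1 (y1 :: rcons c y2) by rewrite /= p1y1 y12_path.
have uy1c : uniq (y1 :: rcons c y2) by rewrite /= mem_rcons inE negb_or y12 y1c rcons_uniq y2c uc.
case: (eqVneq p1 p2) => [p12 | p12].
  have p1_new : p1 \notin y1 :: rcons c y2.
    rewrite !inE mem_rcons inE !negb_or; apply/and3P; split.
    - by apply/eqP => p1y1'; move/eqP: xp1; rewrite p1y1' xy1 eqn_leq ltnn.
    - by apply/eqP => p1y2'; move/eqP: xp1; rewrite p1y2' xy2 eqn_leq ltnn.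
    - by apply/negP => /far_c; rewrite xp1 ltnn.
  have up : uniq (p1 :: y1 :: rcons c y2) by rewrite cons_uniq p1_new uy1c.
  have /negP[] := e_acyc up (ltac:(by rewrite /= size_rcons)).
  change (path e p1 (rcons (y1 :: rcons c y2) p1)).
  by rewrite rcons_path p1_path /= last_rcons p12 e_sym p2y2.
apply: (IH p1 p2 (y1 :: rcons c y2)) => //.
  by rewrite rcons_path p1_path /= last_rcons e_sym p2y2.
by rewrite /= xy1 all_rcons xy2 leqnn; apply/allP.
Qed.

Lemma edge_dist_neq x u v : e u v -> d x u != d x v.
Proof.
move=> uv; apply/eqP => xuv.
by apply: (no_path_beyond (c := [::]) xuv erefl (edge_neq uv)); rewrite //= uv.
Qed.

Lemma edge_dist x u v : e u v -> d x v = (d x u).+1 \/ d x u = (d x v).+1.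
Proof.
move=> uv; have vu : e v u by rewrite e_sym.
have := dist_edge x uv; have := dist_edge x vu; have := edge_dist_neq x uv; lia.
Qed.

Lemma no_triangle x y z : e x y -> e y z -> e x z -> False.
Proof.
move=> xy yz xz; have := edge_dist_neq x yz.
by move: xy xz; rewrite -!dist_eq1 => /eqP-> /eqP->.
Qed.

Lemma closer_neighbor_uniq x y z1 z2 :
  e z1 y -> e z2 y -> d x z1 < d x y -> d x z2 < d x y -> z1 = z2.
Proof.
move=> z1y z2y z1_lt z2_lt; apply/eqP/negPn/negP => z12.
have [xz1 | xz1] := edge_dist x z1y; last by move: z1_lt; rewrite xz1; lia.
have [xz2 | xz2] := edge_dist x z2y; last by move: z2_lt; rewrite xz2; lia.
apply: (no_path_beyond (x := x) (c := [:: y]) erefl _ z12) => //=.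
- by move: xz2; rewrite xz1 => -[->].
- by rewrite z1y (e_sym y) z2y.
- by rewrite z1_lt.
Qed.

Definition parent r x := [pick y | e x y & d r y < d r x].

Lemma parentP r x y : e x y -> d r y < d r x -> parent r x = Some y.
Proof.
move=> xy ryx; rewrite /parent; case: pickP => [z /andP[xz rzx] | /(_ y)]; last by rewrite xy ryx.
by congr Some; apply: (closer_neighbor_uniq (x := r) (y := x)); rewrite // e_sym.
Qed.

Lemma parent_Some r x y : parent r x = Some y -> e x y /\ d r y < d r x.
Proof. by rewrite /parent; case: pickP => // z /andP[xz rzx] [<-]. Qed.

Lemma parent_eqNone r x : (parent r x == None) = (x == r).
Proof.
case: (eqVneq x r) => [-> | xr].
  by rewrite /parent; case: pickP => // z /andP[_]; rewrite dist_refl ltn0.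
have := dist_eq0 r x; rewrite (negbTE xr); case rx: (d r x) => [|k] // _.
have [y yx ry] := dist_pred rx; have xy : e x y by rewrite e_sym.
by rewrite (parentP xy) // rx ry.
Qed.

Lemma edge_parent r x y : e x y = (parent r x == Some y) || (parent r y == Some x).
Proof.
apply/idP/orP => [xy | [/eqP/parent_Some[] // | /eqP/parent_Some[yx _]]]; last by rewrite e_sym.
have yx : e y x by rewrite e_sym.
by case: (edge_dist r xy) => rxy; [right; rewrite (parentP yx) | left; rewrite (parentP xy)];
  rewrite ?rxy.
Qed.

Definition nbrs v := [set u | e v u].

Definition children m u := [set w | e u w & w != m].

Lemma parent_nbr r u : e r u -> parent r u = Some r.
Proof.
move=> ru; have ur : e u r by rewrite e_sym.
by rewrite (parentP ur) // dist_refl (eqP (_ : d r u == 1)) // dist_eq1.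
Qed.

Lemma parent_child r m u : e r m -> u \in children r m -> parent r u = Some m.
Proof.
rewrite inE => rm /andP[mu ur]; have um : e u m by rewrite e_sym.
have rm1 : d r m = 1 by apply/eqP; rewrite dist_eq1.
rewrite (parentP um) // rm1; case: (edge_dist r mu) => [-> | ]; first by rewrite rm1.
by rewrite rm1 => -[/esym/eqP]; rewrite dist_eq0 (negbTE ur).
Qed.

Definition pendant v p := forall z, e v z = (z == p).

Lemma pendant_edge v p : pendant v p -> e v p.
Proof. by move->. Qed.

Lemma pendant_eq v p q : pendant v p -> e v q -> q = p.
Proof. by move=> vp; rewrite vp => /eqP. Qed.

Lemma parent_pendant r x p : pendant x p -> x != r -> parent r x = Some p.
Proof.
move=> xp xr; case px: (parent r x) (parent_eqNone r x) => [y|]; last by rewrite (negbTE xr).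
by have [] := parent_Some px; rewrite xp => /eqP ->.
Qed.

(* Injectivity of g follows from injectivity on siblings by induction on the
   depth, and edges are the pairs {x, parent r x}. *)
Lemma graph_iso_parent (M : finType) (eM : rel M) (pM : M -> option M) (g : M -> T) r :
  (forall a b, eM a b = (pM a == Some b) || (pM b == Some a)) ->
  (forall a, parent r (g a) = omap g (pM a)) ->
  (forall a b, pM a = pM b -> g a = g b -> a = b) ->
  (forall x, exists a, g a = x) ->
  graph_iso e eM.
Proof.
move=> eME g_parent g_sibling g_surj.
have g_inj : injective g.
  suff g_inj_lt k a b : d r (g a) < k -> g a = g b -> a = b.
    by move=> a b; apply: g_inj_lt (ltnSn _).
  elim: k a b => // k IH a b ak gab; apply: g_sibling => //.
  move: (g_parent a) (g_parent b); rewrite -gab.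
  case: (pM a) => [a'|]; case: (pM b) => [b'|] //= pa; rewrite pa // => -[ga'b'].
  have [_ a'_lt] := parent_Some pa.
  by rewrite (IH a' b') // (leq_trans a'_lt).
have g_bij : bijective g.
  apply: (inj_card_bij g_inj); rewrite -(card_codom g_inj).
  by apply/subset_leq_card/subsetP => x _; have [a <-] := g_surj x; apply: codom_f.
have omap_g o b : (omap g o == Some (g b)) = (o == Some b).
  by case: o => //= a; rewrite !(inj_eq (@Some_inj _)) (inj_eq g_inj).
case: g_bij => f gK fK; exists f; split; first by exists g.
by move=> x y; rewrite -{2}[x]fK -{2}[y]fK (edge_parent r) !g_parent !omap_g eME.
Qed.

(** * Sides and statuses *)

Definition side u v := [set x | d u x < d v x].

Lemma side_parent u w x : e u w -> (x \in side w u) = (parent x u == Some w).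
Proof.
move=> uw; rewrite inE !(dist_sym _ x); apply/idP/eqP => [|/parent_Some[] //].
exact: parentP.
Qed.

Lemma sideC u v : e u v -> side v u = ~: side u v.
Proof.
move=> uv; apply/setP => x; rewrite !inE -!(dist_sym x) -leqNgt ltn_neqAle.
by rewrite eq_sym (edge_dist_neq x uv).
Qed.

Lemma mem_side u v : e u v -> u \in side u v.
Proof. by move=> uv; rewrite inE dist_refl (dist_sym v) lt0n dist_eq0 eq_sym (edge_neq uv). Qed.

Lemma card_side u v : e u v -> #|side u v| + #|side v u| = n.
Proof. by move=> uv; rewrite (sideC uv) cardsC. Qed.

Lemma status_edge u v : e u v -> s u + #|side u v| = s v + #|side v u|.
Proof.
move=> uv; rewrite /status !card_sum_mem -!big_split /=.
apply: eq_bigr => x _; rewrite !inE -!(dist_sym x).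
by case: (edge_dist x uv) => ->; rewrite ltnSn (ltnNge _.+1) leqnSn addn0 addn1.
Qed.

Lemma card_side_rec u m : e u m ->
  #|side u m| = (\sum_(w in children m u) #|side w u|).+1.
Proof.
move=> um; rewrite (eq_bigl (fun w => e u w && (w != m))) => [|w]; last by rewrite inE.
have side_sum x : (x \in side u m : nat) =
    (x == u) + \sum_(w | e u w && (w != m)) (x \in side w u : nat).
  under eq_bigr => w /andP[uw _] do rewrite (side_parent x uw).
  case: (eqVneq x u) => [-> | xu].
    rewrite inE dist_refl lt0n dist_eq0 (edge_neq um).
    by rewrite big1 // => w _; have /eqP-> : parent u u == None by rewrite parent_eqNone.
  have : parent x u != None by rewrite parent_eqNone eq_sym.
  case px: (parent x u) => [w0|] // _.
  have [uw0 _] := parent_Some px.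
  under eq_bigr do rewrite (inj_eq (@Some_inj _)).
  have mu : e m u by rewrite e_sym.
  by rewrite sum_eq_indicator uw0 (sideC mu) in_setC (side_parent x um) px.
rewrite card_sum_mem (eq_bigr _ (fun x _ => side_sum x)) big_split /= exchange_big /=.
rewrite (bigD1 u) //= eqxx big1 => [|x /negbTE -> //]; rewrite add1n; congr _.+1.
by apply: eq_bigr => w _; rewrite card_sum_mem.
Qed.

Lemma children_pendant w u : pendant w u -> children u w = set0.
Proof. by move=> wu; apply/setP => z; rewrite !inE wu andbN. Qed.

Lemma card_side_pendant w u : pendant w u -> #|side w u| = 1.
Proof.
by move=> wu; rewrite (card_side_rec (pendant_edge wu)) children_pendant // big_set0.
Qed.

Lemma status_pendant l p : pendant l p -> s l + 2 = s p + n.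
Proof.
move=> lp; have := status_edge (pendant_edge lp); have := card_side (pendant_edge lp).
by rewrite card_side_pendant //; lia.
Qed.

Lemma card_side_hub u m : e u m -> {in children m u, forall w, pendant w u} ->
  #|side u m| = #|children m u|.+1.
Proof.
move=> um pendants; rewrite card_side_rec // -sum1_card.
by congr _.+1; apply: eq_bigr => w /pendants; apply: card_side_pendant.
Qed.

Lemma status_hub u m : e u m -> {in children m u, forall w, pendant w u} ->
  s u + 2 * #|children m u|.+1 = s m + n.
Proof.
move=> um pendants; have := status_edge um; have := card_side um.
by rewrite card_side_hub //; lia.
Qed.

Lemma card_side_centre m m' b : e m m' ->
  (forall u, u \in children m' m ->
     #|children m u| = b /\ {in children m u, forall w, pendant w u}) ->
  #|side m m'| = (#|children m' m| * b.+1).+1.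
Proof.
move=> mm' hubs; rewrite card_side_rec // -sum_nat_const; congr _.+1.
apply: eq_bigr => u u_hub; have [<- pendants] := hubs u u_hub.
by apply: card_side_hub => //; move: u_hub; rewrite inE e_sym => /andP[].
Qed.

Lemma pendant_of_status u w : e u w -> s u + n <= s w + 2 -> pendant w u.
Proof.
move=> uw s_uw; have wu : e w u by rewrite e_sym.
have small : #|side w u| <= 1.
  by have := status_edge wu; have := card_side wu; lia.
move=> z; case: (eqVneq z u) => [-> // | zu]; apply/negP => wz.
have zc : z \in children u w by rewrite inE wz zu.
have : 0 < #|side z w| by apply/card_gt0P; exists z; rewrite mem_side // e_sym.
move: small; rewrite card_side_rec // ltnS leqn0 sum_nat_eq0.
by move=> /forall_inP/(_ z zc)/eqP->.
Qed.

Lemma status_convex v u w : e v u -> e v w -> u != w -> 2 * s v < s u + s w.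
Proof.
move=> vu vw uw; have uv : e u v by rewrite e_sym.
have wv : e w v by rewrite e_sym.
have disj : side u v :&: side w v = set0.
  apply/setP => x; rewrite in_setI (side_parent x vu) (side_parent x vw) in_set0.
  by apply/negP => /andP[/eqP-> /eqP[/eqP]]; rewrite (negbTE uw).
have miss_v : side u v :|: side w v \subset [set~ v].
  by apply/subsetP => x; rewrite !inE; apply: contraL => /eqP ->; rewrite dist_refl !ltn0.
have := subset_leq_card miss_v; rewrite cardsC1 cardsU disj cards0 subn0.
have := status_edge uv; have := card_side uv; have := status_edge wv; have := card_side wv.
have : 0 < n by apply/card_gt0P; exists v.
lia.
Qed.

Lemma local_min_status_lt v : (forall u, e v u -> s v <= s u) ->
  forall k y z, e z y -> d v z = k.+1 -> d v y = k.+2 -> s z < s y.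
Proof.
move=> v_min; elim=> [|k IH] y z zy vz vy; have [w wz vw] := dist_pred vz;
  have zw : e z w by rewrite e_sym.
all: have wy : w != y by apply/eqP => wy_eq; move: vw; rewrite wy_eq vy; lia.
all: suff : s w <= s z by have := status_convex zw zy wy; lia.
  by move/eqP: vw; rewrite dist_eq0 => /eqP ->; apply: v_min; rewrite -dist_eq1 vz.
exact/ltnW/(IH z w).
Qed.

Lemma local_min_global v : (forall u, e v u -> s v <= s u) -> forall y, s v <= s y.
Proof.
move=> v_min y; have [k vy] : exists k, d v y = k by exists (d v y).
elim: k y vy => [|k IH] y vy; first by move/eqP: vy; rewrite dist_eq0 => /eqP ->.
have [z zy vz] := dist_pred vy; apply: leq_trans (IH z vz) _.
case: k vz vy {IH} => [|k] vz vy; last exact/ltnW/(local_min_status_lt v_min zy vz vy).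
by move/eqP: vz; rewrite dist_eq0 => /eqP ->; apply: v_min; rewrite -dist_eq1 vy.
Qed.

Definition fork v := exists u w, [/\ e v u, e v w & u != w].

Lemma pendant_or_fork v : 1 < n -> (exists p, pendant v p) \/ fork v.
Proof.
move=> n_gt1; have [p vp] : exists p, e v p.
  have /card_gt0P[y] : 0 < #|[set~ v]| by rewrite cardsC1; lia.
  rewrite !inE -dist_eq0 dist_sym; case yv: (d y v) => [|k] // _.
  by have [z zv _] := dist_pred yv; exists z; rewrite e_sym.
case: (boolP [exists w, e v w && (w != p)]) => [/existsP[w /andP[vw wp]] | /existsPn none].
  by right; exists p, w; rewrite eq_sym.
left; exists p => z; case: (eqVneq z p) => [-> // | zp].
by apply/negbTE; have := none z; rewrite zp andbT.
Qed.

Lemma fork_children v u : fork v -> exists w, w \in children u v.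
Proof.
move=> [w1 [w2 [vw1 vw2 w12]]]; case: (eqVneq w1 u) => [w1u | w1u].
  by exists w2; rewrite inE vw2 -w1u eq_sym w12.
by exists w1; rewrite inE vw1 w1u.
Qed.

Lemma pendant_closure (X : {set T}) x0 : x0 \in X ->
  (forall u w, u \in X -> w \notin X -> e u w -> pendant w u) ->
  forall y, y \notin X -> exists2 u, u \in X & pendant y u.
Proof.
move=> x0X hang y; have [k x0y] : exists k, d x0 y = k by exists (d x0 y).
elim: k y x0y => [|k IH] y x0y yX.
  by move/eqP: x0y yX; rewrite dist_eq0 => /eqP ->; rewrite x0X.
have [z zy x0z] := dist_pred x0y.
case: (boolP (z \in X)) => [zX | /(IH z x0z)[u uX zu]]; first by exists z; last exact: hang.
by move: (zu y); rewrite zy => /esym/eqP yu; rewrite yu uX in yX.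
Qed.

(** * Recognising the two families *)

Section Star.
Variables (c : T) (b : nat).
Hypothesis card_children : forall u, u \in nbrs c -> #|children c u| = b.
Hypothesis pendants : forall u, u \in nbrs c -> {in children c u, forall w, pendant w u}.

Lemma star_cover x :
  [\/ x = c, x \in nbrs c | exists2 u, u \in nbrs c & x \in children c u].
Proof.
case: (eqVneq x c) => [-> | xc]; first by constructor 1.
case: (boolP (x \in nbrs c)) => [x_nbr | x_far]; first by constructor 2.
have x_out : x \notin c |: nbrs c by rewrite in_setU1 negb_or xc.
have [|u] := pendant_closure (setU11 c _) _ x_out.
  move=> u w; rewrite !inE => /predU1P[-> | cu] /norP[wc cw] uw; first by rewrite uw in cw.
  by apply: pendants; rewrite ?inE // uw wc.
rewrite in_setU1 => /predU1P[-> | u_nbr] xu.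
  by rewrite inE e_sym (pendant_edge xu) in x_far.
by constructor 3; exists u; rewrite // inE e_sym (pendant_edge xu) xc.
Qed.

Lemma graph_iso_star : graph_iso e (@star_pend_rel #|nbrs c| b).
Proof.
set m := #|nbrs c|; have [hub_inj hubP hub_onto] := enum_nthP c (erefl m).
pose hub (i : 'I_m) := nth c (enum (nbrs c)) i.
pose leaf (i : 'I_m) (j : 'I_b) := nth c (enum (children c (hub i))) j.
have leafP i := enum_nthP c (card_children (hubP i)).
pose g x := match x with
  | None => c
  | Some (inl i) => hub i
  | Some (inr (i, j)) => leaf i j
  end.
apply: (graph_iso_parent (pM := @star_parent m b) (g := g) (r := c)).
- exact: star_pend_relE.
- case=> [[i | [i j]] |] /=.
  + by apply: parent_nbr; have := hubP i; rewrite inE.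
  + have [_ /(_ j) leafC _] := leafP i.
    apply: parent_pendant; first exact: (pendants (hubP i) leafC).
    by move: leafC; rewrite inE => /andP[].
  + by apply/eqP; rewrite parent_eqNone.
- case=> [[i | [i j]] |] [[i' | [i' j']] |] //= => [_ /hub_inj -> // | [<-]].
  by have [/(_ j j') inj _ _] := leafP i => /inj ->.
move=> x; case: (star_cover x) => [-> | /hub_onto[i <-] | [u /hub_onto[i <-] x_leaf]].
- by exists None.
- by exists (Some (inl i)).
have [_ _ /(_ x x_leaf)[j <-]] := leafP i.
by exists (Some (inr (i, j))).
Qed.

End Star.

Section DoubleStar.
Variables (mid : bool -> T) (a b : nat).
Local Notation hubs c := (children (mid (~~ c)) (mid c)).
Hypothesis mid_edge : e (mid true) (mid false).
Hypothesis card_hubs : forall c, #|hubs c| = a.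
Hypothesis card_children : forall c u, u \in hubs c -> #|children (mid c) u| = b.
Hypothesis pendants :
  forall c u, u \in hubs c -> {in children (mid c) u, forall w, pendant w u}.

Lemma mid_edgeC c : e (mid c) (mid (~~ c)).
Proof. by case: c; rewrite // e_sym. Qed.

Lemma child_neq_mid c u w c' : u \in hubs c -> w \in children (mid c) u -> w != mid c'.
Proof.
move=> u_hub w_child; have := u_hub; rewrite inE => /andP[cu _].
case: (eqVneq c' c) => [-> | c'c]; first by move: w_child; rewrite inE => /andP[].
have -> : c' = ~~ c by move: c'c; case: (c); case: c'.
apply: contraNneq (edge_neq cu) => w_mid; apply/eqP/(pendant_eq (pendants u_hub w_child)).
by rewrite w_mid e_sym mid_edgeC.
Qed.

Lemma dstar_cover x : [\/ exists c, x = mid c, exists c, x \in hubs c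
  | exists c, exists2 u, u \in hubs c & x \in children (mid c) u].
Proof.
pose X := [set x | [exists c, (x == mid c) || (x \in hubs c)]].
have inX c x' : (x' == mid c) || (x' \in hubs c) -> x' \in X.
  by move=> x'c; rewrite inE; apply/existsP; exists c.
have midX c : mid c \in X by apply: (inX c); rewrite eqxx.
have nbr_inX c x' : e (mid c) x' -> x' \in X.
  move=> cx'; case: (eqVneq x' (mid (~~ c))) => [-> // | x'c].
  by apply: (inX c); rewrite inE cx' x'c orbT.
case: (boolP (x \in X)) => [| x_out].
  by rewrite inE => /existsP[c /orP[/eqP-> | xc]]; [constructor 1 | constructor 2]; exists c.
have [|u] := pendant_closure (midX true) _ x_out.
  move=> u w; rewrite inE => /existsP[c /orP[/eqP-> | uc]] w_out uw.
    by rewrite (nbr_inX c w uw) in w_out.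
  by apply: (pendants uc); rewrite inE uw; apply: contraNneq w_out => ->.
rewrite inE => /existsP[c /orP[/eqP-> | uc]] xu.
  by rewrite (nbr_inX c x) // e_sym (pendant_edge xu) in x_out.
constructor 3; exists c, u; rewrite // inE e_sym (pendant_edge xu).
by apply: contraNneq x_out => ->.
Qed.

Lemma graph_iso_dstar : graph_iso e (@dstar_pend_rel a b).
Proof.
have hubP c := enum_nthP (mid c) (card_hubs c).
pose hub c (i : 'I_a) := nth (mid c) (enum (hubs c)) i.
have hub_in c i : hub c i \in hubs c by case: (hubP c) => _ /(_ i).
pose leaf c (i : 'I_a) (j : 'I_b) := nth (mid c) (enum (children (mid c) (hub c i))) j.
have leafP c i := enum_nthP (mid c) (card_children (hub_in c i)).
have leaf_in c i j : leaf c i j \in children (mid c) (hub c i) by case: (leafP c i) => _ /(_ j).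
pose g x := match x with
  | inl (inl c) => mid c
  | inl (inr (c, i)) => hub c i
  | inr (c, i, j) => leaf c i j
  end.
apply: (graph_iso_parent (pM := @dstar_parent a b) (g := g) (r := mid true)).
- exact: dstar_pend_relE.
- case=> [[[] | [[] i]] | [[[] i] j]] /=.
  + by apply/eqP; rewrite parent_eqNone.
  + exact: parent_nbr.
  + by apply: parent_nbr; have := hub_in true i; rewrite inE => /andP[].
  + exact: parent_child (hub_in false i).
  + by apply: parent_pendant (pendants (hub_in _ i) (leaf_in _ i j)) (child_neq_mid _ _ _).
  + by apply: parent_pendant (pendants (hub_in _ i) (leaf_in _ i j)) (child_neq_mid _ _ _).
- case=> [[[] | [[] i]] | [[[] i] j]] [[[] | [[] i']] | [[[] i'] j']] //=.
  + by move=> _ mid_hub; have := hub_in true i'; rewrite inE -mid_hub eqxx andbF.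
  + by move=> _ hub_mid; have := hub_in true i; rewrite inE hub_mid eqxx andbF.
  + by move=> _; case: (hubP true) => inj _ _ /inj ->.
  + by move=> _; case: (hubP false) => inj _ _ /inj ->.
  + by move=> [->]; case: (leafP true i') => inj _ _ /inj ->.
  + by move=> [->]; case: (leafP false i') => inj _ _ /inj ->.
move=> x; case: (dstar_cover x) => [[c ->] | [c xc] | [c [u uc x_leaf]]].
- by exists (inl (inl c)).
- by case: (hubP c) => _ _ /(_ x xc)[i <-]; exists (inl (inr (c, i))).
case: (hubP c) => _ _ /(_ u uc)[i ui]; have {}ui : hub c i = u := ui.
rewrite -ui in x_leaf; have [_ _ /(_ x x_leaf)[j <-]] := leafP c i.
by exists (inr (c, i, j)).
Qed.

End DoubleStar.

(** * Trees with three statuses *)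

Section ThreeStatuses.
Variables vmin vmid vmax : T.
Hypotheses (min_mid : s vmin < s vmid) (mid_max : s vmid < s vmax).
Hypothesis three_statuses : forall v, s v \in [:: s vmin; s vmid; s vmax].

Local Notation smin := (s vmin).
Local Notation smid := (s vmid).
Local Notation smax := (s vmax).

Lemma status_cases v : [\/ s v = smin, s v = smid | s v = smax].
Proof.
have := three_statuses v; rewrite !inE.
by case/or3P => /eqP; [constructor 1 | constructor 2 | constructor 3].
Qed.

Lemma min_le v : smin <= s v.
Proof. by case: (status_cases v) => ->; lia. Qed.

Lemma max_ge v : s v <= smax.
Proof. by case: (status_cases v) => ->; lia. Qed.

Lemma card_gt2 : 2 < n.
Proof.
have uniq3 : uniq [:: vmin; vmid; vmax].
  apply: (@map_uniq _ _ s); rewrite /= !inE !negb_or !neq_ltn min_mid mid_max.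
  by rewrite (ltn_trans min_mid mid_max) ?orbT.
by rewrite -[3]/(size [:: vmin; vmid; vmax]) -(card_uniqP uniq3) max_card.
Qed.

Lemma fork_lt_max v : fork v -> s v < smax.
Proof.
case=> u [w [vu vw uw]]; have := status_convex vu vw uw.
by have := max_ge u; have := max_ge w; lia.
Qed.

(* If a leaf had the middle status, every vertex whose status is not minimal
   would be a leaf hanging on a vertex of minimal status, including vmax. *)
Lemma pendant_status_max l p : pendant l p -> s l = smax.
Proof.
move=> lp; have lp_status := status_pendant lp; have n_gt2 := card_gt2.
case: (status_cases l) => [sl | sl | //]; first by have := min_le p; lia.
have sp : s p = smin by case: (status_cases p) => sp; lia.
pose X := [set v | s v == smin].
have hang u w : u \in X -> w \notin X -> e u w -> pendant w u.
  rewrite !inE => /eqP su sw uw; apply: (pendant_of_status uw).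
  by case: (status_cases w) => sw'; move: sw; rewrite sw' ?eqxx //; lia.
have pX : p \in X by rewrite inE sp.
have vmaxX : vmax \notin X by rewrite inE neq_ltn (ltn_trans min_mid mid_max) orbT.
have [u uX vmax_u] := pendant_closure pX hang vmaxX.
by have := status_pendant vmax_u; move: uX; rewrite inE => /eqP; lia.
Qed.

Lemma fork_hub v : fork v -> s v != smin ->
  s v = smid /\ exists u, [/\ e v u, s u = smin & {in children u v, forall w, pendant w v}].
Proof.
move=> v_fork v_min; have v_max := fork_lt_max v_fork.
have sv : s v = smid by case: (status_cases v) v_min v_max => ->; rewrite ?eqxx //; lia.
split=> //; have [u vu u_lt] : exists2 u, e v u & s u < s v.
  apply/exists_inP; apply: contraNT v_min => /exists_inPn v_locmin.
  rewrite eqn_leq min_le andbT (local_min_global _ vmin) // => u vu.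
  by rewrite leqNgt v_locmin.
have su : s u = smin by case: (status_cases u) u_lt => ->; lia.
exists u; split=> // w; rewrite inE => /andP[vw wu].
have [[p wp] | w_fork] := pendant_or_fork w (ltnW card_gt2).
  have wv : e w v by rewrite e_sym.
  by rewrite (pendant_eq wp wv).
exfalso; have := status_convex vu vw (_ : u != w); rewrite eq_sym wu sv su => /(_ isT).
by have := fork_lt_max w_fork; case: (status_cases w) => ->; lia.
Qed.

Lemma mid_max_gap : smid + n = smax + 2.
Proof.
have [[p vmid_p] | vmid_fork] := pendant_or_fork vmid (ltnW card_gt2).
  by have := pendant_status_max vmid_p; lia.
have vmid_ne : smid != smin by rewrite neq_ltn min_mid orbT.
have [_ [u [_ _ pendants]]] := fork_hub vmid_fork vmid_ne.
have [w /pendants w_vmid] := fork_children u vmid_fork.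
by have := status_pendant w_vmid; rewrite (pendant_status_max w_vmid).
Qed.

Lemma pendant_parent_status l p : pendant l p -> s p = smid.
Proof.
move=> lp; have := status_pendant lp; have := mid_max_gap.
by rewrite (pendant_status_max lp); lia.
Qed.

Lemma centre_fork m : s m = smin -> fork m.
Proof.
move=> sm; have [[p mp] | //] := pendant_or_fork m (ltnW card_gt2).
by have := pendant_status_max mp; lia.
Qed.

Lemma centres_adjacent m m' : s m = smin -> s m' = smin -> m != m' -> e m m'.
Proof.
move=> sm sm' mm'; rewrite -dist_eq1.
case mm'_dist: (d m m') (dist_eq0 m m') => [|[|k]] //; first by rewrite eq_sym (negbTE mm').
have [z zm' mz] := dist_pred mm'_dist.
have m_min u : e m u -> s m <= s u by rewrite sm => _; apply: min_le.
by have := local_min_status_lt m_min zm' mz mm'_dist; rewrite sm'; have := min_le z; lia.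
Qed.

Lemma hub_pendants m u : s m = smin -> e m u -> s u != smin ->
  s u = smid /\ {in children m u, forall w, pendant w u}.
Proof.
move=> sm mu su.
have [[p up] | u_fork] := pendant_or_fork u (ltnW card_gt2).
  have pm : m = p by apply: (pendant_eq up); rewrite e_sym.
  by move: (pendant_parent_status up); rewrite -pm sm; lia.
have [su_mid [m' [um' sm' pendants]]] := fork_hub u_fork su; split=> //.
case: (eqVneq m' m) => [<- // | m'm].
have mu' : m \in children m' u by rewrite inE e_sym mu eq_sym m'm.
by have := pendant_status_max (pendants m mu'); lia.
Qed.

Lemma hub_card_children m u : s m = smin -> e m u -> s u != smin ->
  2 * #|children m u|.+1 + smid = smin + n.
Proof.
move=> sm mu su; have [su_mid pendants] := hub_pendants sm mu su.
have := status_hub (_ : e u m) pendants; rewrite e_sym mu su_mid sm => /(_ isT); lia.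
Qed.

Lemma hub_children_gt0 m u : s m = smin -> e m u -> s u != smin -> 0 < #|children m u|.
Proof.
move=> sm mu su; have [su_mid _] := hub_pendants sm mu su.
have [[p up] | u_fork] := pendant_or_fork u (ltnW card_gt2).
  by have := pendant_status_max up; lia.
by have [w wu] := fork_children m u_fork; apply/card_gt0P; exists w.
Qed.

Lemma hub_children_card_eq m u m' u' : s m = smin -> e m u -> s u != smin ->
  s m' = smin -> e m' u' -> s u' != smin -> #|children m u| = #|children m' u'|.
Proof.
move=> sm mu su sm' mu' su'.
by have := hub_card_children sm mu su; have := hub_card_children sm' mu' su'; lia.
Qed.

Lemma one_centre_in_family : (forall m, s m = smin -> m = vmin) -> in_family e.
Proof.
move=> centre; have [u0 [w0 [vu0 vw0 u0w0]]] := centre_fork (erefl smin).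
have hub_min u : e vmin u -> s u != smin.
  by move=> vu; apply/eqP => /centre uv; rewrite uv e_irr in vu.
left; exists #|nbrs vmin|, #|children vmin u0|; split; [|split].
- have : [set u0; w0] \subset nbrs vmin by apply/subsetP => x; rewrite !inE => /orP[] /eqP ->.
  by move/subset_leq_card; rewrite cards2 u0w0.
- exact: (hub_children_gt0 (erefl smin) vu0 (hub_min u0 vu0)).
apply: graph_iso_star => u; rewrite inE => vu.
  exact: (hub_children_card_eq (erefl smin) vu (hub_min u vu) (erefl smin) vu0 (hub_min u0 vu0)).
exact: (hub_pendants (erefl smin) vu (hub_min u vu)).2.
Qed.

Lemma two_centres_in_family m1 : s m1 = smin -> m1 != vmin -> in_family e.
Proof.
move=> sm1 m1_vmin; pose mid c := if c then vmin else m1.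
have mid_min c : s (mid c) = smin by case: c.
have mid_edge : e (mid true) (mid false) by apply: centres_adjacent; rewrite // eq_sym.
have hub_edge c u : u \in children (mid (~~ c)) (mid c) -> e (mid c) u by rewrite inE => /andP[].
have hub_min c u : u \in children (mid (~~ c)) (mid c) -> s u != smin.
  move=> u_hub; apply/eqP => su; have cu := hub_edge c u u_hub.
  apply: (no_triangle (mid_edgeC mid_edge c) _ cu); apply: centres_adjacent => //.
  by move: u_hub; rewrite inE eq_sym => /andP[].
have [u0 u0_hub] := fork_children (mid false) (centre_fork (mid_min true)).
pose b := #|children vmin u0|.
have hub_card c u : u \in children (mid (~~ c)) (mid c) -> #|children (mid c) u| = b.
  move=> u_hub.
  apply: (hub_children_card_eq (mid_min c) (hub_edge c u u_hub) (hub_min c u u_hub)).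
  - exact: mid_min true.
  - exact: hub_edge u0_hub.
  - exact: hub_min u0_hub.
have hub_pend c u : u \in children (mid (~~ c)) (mid c) ->
    {in children (mid c) u, forall w, pendant w u}.
  by move=> u_hub; apply: (hub_pendants (mid_min c) (hub_edge c u u_hub) (hub_min c u u_hub)).2.
have arm c : #|side (mid c) (mid (~~ c))| = (#|children (mid (~~ c)) (mid c)| * b.+1).+1.
  apply: card_side_centre => [|u u_hub]; first exact: mid_edgeC.
  by split; [apply: hub_card | apply: hub_pend].
have arms_eq : #|children vmin m1| = #|children m1 vmin|.
  (* the two centres have the same status, hence sides of the same size *)
  have := status_edge mid_edge; rewrite !mid_min (arm true) (arm false) => /addnI [].
  by move/eqP; rewrite eqn_pmul2r // => /eqP.
right; exists #|children m1 vmin|, b; split; [|split].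
- by apply/card_gt0P; exists u0.
- exact: (hub_children_gt0 (mid_min true) (hub_edge true u0 u0_hub) (hub_min true u0 u0_hub)).
by apply: (graph_iso_dstar (mid := mid)) => //; case.
Qed.

Lemma three_statuses_in_family : in_family e.
Proof.
case: (boolP [exists m, (s m == smin) && (m != vmin)]) => [|/existsPn unique].
  by case/existsP => m1 /andP[/eqP sm1 m1_vmin]; apply: two_centres_in_family sm1 m1_vmin.
apply: one_centre_in_family => m sm; apply/eqP.
by have := unique m; rewrite sm eqxx /= negbK.
Qed.

End ThreeStatuses.

Lemma kstat3_in_family : kstat e = 3 -> in_family e.
Proof.
case/size_undup_map3P => vmin [vmid [vmax [min_mid mid_max three]]].
exact: three_statuses_in_family min_mid mid_max three.
Qed.

(** * The two families have three statuses *)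

Lemma kstat3_of_levels c u w : 2 < n -> s c < s u -> pendant w u ->
  (forall v, s v \in [:: s c; s u; s w]) -> kstat e = 3.
Proof.
move=> n_gt2 cu wu levels; apply/size_undup_map3P; exists c, u, w; split=> //.
by have := status_pendant wu; lia.
Qed.

Lemma star_kstat3 m b : 2 <= m -> 1 <= b -> graph_iso e (@star_pend_rel m b) -> kstat e = 3.
Proof.
move=> m_ge2 b_ge1 /graph_iso_inv[g [g_bij g_edge g_status]].
have [f gK fK] := g_bij.
have perm_status p q x : s (g (star_perm p q x)) = s (g x).
  by rewrite !g_status (status_iso (star_perm_bij p q) (star_perm_edge p q)).
pose i0 := Ordinal (ltnW m_ge2); pose i1 := Ordinal m_ge2; pose j0 := Ordinal b_ge1.
pose c := g None; pose hub i := g (Some (inl i)); pose leaf i j := g (Some (inr (i, j))).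
have hub_status i : s (hub i) = s (hub i0).
  by rewrite -(perm_status (tperm i i0) 1%g) /= tpermL.
have leaf_status i j : s (leaf i j) = s (leaf i0 j0).
  by rewrite -(perm_status (tperm i i0) (tperm j j0)) /= !tpermL.
apply: (kstat3_of_levels (c := c) (u := hub i0) (w := leaf i0 j0)).
- rewrite -(bij_eq_card g_bij) card_option card_sum card_prod !card_ord; lia.
- have hubs_ne : hub i0 != hub i1.
    by apply/eqP => /(bij_inj g_bij) [].
  have := status_convex (_ : e c (hub i0)) (_ : e c (hub i1)) hubs_ne.
  by rewrite (hub_status i1) !g_edge => /(_ isT isT); lia.
- by move=> z; rewrite -[z]fK g_edge (bij_eq g_bij) star_pend_rel_leaf.
move=> v; rewrite -[v]fK; case: (f v) => [[i | [i j]] |].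
- by rewrite -/(hub i) hub_status !inE eqxx orbT.
- by rewrite -/(leaf i j) leaf_status !inE eqxx !orbT.
- by rewrite !inE eqxx.
Qed.

Lemma dstar_kstat3 a b : 1 <= a -> 1 <= b -> graph_iso e (@dstar_pend_rel a b) -> kstat e = 3.
Proof.
move=> a_ge1 b_ge1 /graph_iso_inv[g [g_bij g_edge g_status]].
have [f gK fK] := g_bij.
have perm_status k p q x : s (g (dstar_perm k p q x)) = s (g x).
  by rewrite !g_status (status_iso (dstar_perm_bij k p q) (dstar_perm_edge k p q)).
pose i0 := Ordinal a_ge1; pose j0 := Ordinal b_ge1.
pose mid c := g (inl (inl c)); pose hub c i := g (inl (inr (c, i))).
pose leaf c i j := g (inr (c, i, j)).
have mid_status c : s (mid c) = s (mid true).
  by rewrite -(perm_status (tperm c true) 1%g 1%g) /= tpermL.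
have hub_status c i : s (hub c i) = s (hub true i0).
  by rewrite -(perm_status (tperm c true) (tperm i i0) 1%g) /= !tpermL.
have leaf_status c i j : s (leaf c i j) = s (leaf true i0 j0).
  by rewrite -(perm_status (tperm c true) (tperm i i0) (tperm j j0)) /= !tpermL.
apply: (kstat3_of_levels (c := mid true) (u := hub true i0) (w := leaf true i0 j0)).
- rewrite -(bij_eq_card g_bij) !card_sum !card_prod card_bool !card_ord; lia.
- have mid_hub : mid false != hub true i0 by apply/eqP => /(bij_inj g_bij).
  have := status_convex (_ : e (mid true) (mid false)) (_ : e (mid true) (hub true i0)) mid_hub.
  by rewrite mid_status !g_edge => /(_ isT isT); lia.
- by move=> z; rewrite -[z]fK g_edge (bij_eq g_bij) dstar_pend_rel_leaf.
move=> v; rewrite -[v]fK; case: (f v) => [[c | [c i]] | [[c i] j]].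
- by rewrite -/(mid c) mid_status !inE eqxx.
- by rewrite -/(hub c i) hub_status !inE eqxx orbT.
- by rewrite -/(leaf c i j) leaf_status !inE eqxx !orbT.
Qed.

End Tree.

Unset Implicit Arguments.

Theorem theorem3p6 (T : finType) (e : rel T)
  (e_sym : symmetric e) (e_irr : irreflexive e) (T_tree : is_tree e) :
  kstat e = 3 <-> in_family e.
Proof.
case: T_tree => e_conn e_acyc; split; first exact: kstat3_in_family.
case=> [[m [b [m_ge2 [b_ge1 iso]]]] | [a [b [a_ge1 [b_ge1 iso]]]]].
  exact: star_kstat3 iso.
exact: dstar_kstat3 iso.
Qed.
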